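(* Let $I\subset S=K[x_1,\dots,x_n]$ be a matroidal ideal generated in degree two. Then $\mathrm{HS}_k(I)$ is a matroidal ideal for all $k\ge0$.
   Context: A polymatroidal ideal is a monomial ideal $I$ generated in a single degree such that for all $u,v\in G(I)$ and every $i$ with $\deg_{x_i}(u)>\deg_{x_i}(v)$ there exists $j$ with $\deg_{x_j}(u)<\deg_{x_j}(v)$ and $x_ju/x_i\in G(I)$; a matroidal ideal is a squarefree polymatroidal ideal. $\mathrm{HS}_k(I)$ is the monomial ideal generated by $\mathbf x^{\mathbf a}$ for the $k$th multigraded shifts $\mathbf a$ of $I$ (i.e. $F_k=\bigoplus_jS(-\mathbf a_{kj})$ in the minimal multigraded free resolution). By convention the zero ideal is allowed (for $k$ beyond the projective dimension). *)

From HB Require Import structures.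
From mathcomp Require Import all_boot all_order all_algebra.
Set Implicit Arguments. Unset Strict Implicit. Unset Printing Implicit Defensive.
Import GRing.Theory.

(** Monomials of S = K[x_1,...,x_n] are identified with exponent vectors
    (variables indexed by 'I_n). *)
Definition mon (n : nat) := {ffun 'I_n -> nat}.

Section Monomials.
Variable n : nat.

Definition mdiv (u v : mon n) : bool := [forall i, u i <= v i].

Definition mdeg (u : mon n) : nat := \sum_(i < n) u i.

(** x_j * u / x_i  (used when u i >= 1) *)
Definition mexch (u : mon n) (i j : 'I_n) : mon n :=
  [ffun l => (u l - (l == i)) + (l == j)].

(** A monomial ideal is described by the predicate "x^u \in J" on monomials.
    G(J): the minimal monomial generators of J. *)
Definition mingen (J : mon n -> Prop) (u : mon n) : Prop :=
  J u /\ forall v, J v -> mdiv v u -> v = u.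

Definition generated_in_degree (J : mon n -> Prop) (d : nat) : Prop :=
  forall u, mingen J u -> mdeg u = d.

Definition polymatroidal (J : mon n -> Prop) : Prop :=
  (exists d, generated_in_degree J d) /\
  forall u v, mingen J u -> mingen J v ->
    forall i : 'I_n, v i < u i ->
      exists j : 'I_n, u j < v j /\ mingen J (mexch u i j).

Definition matroidal (J : mon n -> Prop) : Prop :=
  polymatroidal J /\ forall u, mingen J u -> forall i, u i <= 1.

Definition gen_ideal (gens : seq (mon n)) (m : mon n) : bool :=
  has (fun g => mdiv g m) gens.

(** Multigraded Betti numbers of I = (gens), defined as
    beta_{k,a}(I) = dim_K Tor_k^S(K, I)_a, computed as the degree-a part of the
    homology of the Koszul complex K(x_1..x_n; S) (x) I.  Its degree-a part in
    homological degree k has basis e_F (x) x^(a - F) for F \subset [n], |F| = k,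
    F \subset supp a and x^(a-F) \in I; the differential is
    e_F (x) m |-> sum_{j in F} (-1)^{#{l in F, l < j}} e_{F \ j} (x) x_j m. *)
Definition indic (F : {set 'I_n}) : mon n := [ffun i => (i \in F) : nat].

Definition kbasis (gens : seq (mon n)) (a : mon n) (F : {set 'I_n}) : bool :=
  [forall i in F, 0 < a i] &&
  gen_ideal gens [ffun i => a i - indic F i].

Variable K : fieldType.

Definition kdiff_entry (gens : seq (mon n)) (k : nat) (a : mon n)
  (F E : {set 'I_n}) : K :=
  if [&& kbasis gens a F, kbasis gens a E & #|F| == k] then
    (\sum_(j in F | E == F :\ j) (-1) ^+ #|[set l in F | (l < j)%N]|)%R
  else 0%R.

Definition NS := #|{: {set 'I_n}}|.

(** matrix of the k-th differential (row-vector convention), rows/columns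
    indexed by all subsets of [n] (rows/columns outside the basis are zero) *)
Definition kdiff (gens : seq (mon n)) (k : nat) (a : mon n) : 'M[K]_NS :=
  \matrix_(p < NS, q < NS)
     kdiff_entry gens k a (enum_val p) (enum_val q).

Definition kdim (gens : seq (mon n)) (k : nat) (a : mon n) : nat :=
  #|[set F : {set 'I_n} | kbasis gens a F & #|F| == k]|.

(** dim H_k = dim C_k - rank d_k - rank d_{k+1} *)
Definition betti (gens : seq (mon n)) (k : nat) (a : mon n) : nat :=
  kdim gens k a - \rank (kdiff gens k a) - \rank (kdiff gens k.+1 a).

(** HS_k(I): the monomial ideal generated by the x^a with a a k-th multigraded
    shift of I, i.e. beta_{k,a}(I) <> 0. *)
Definition HS (gens : seq (mon n)) (k : nat) (m : mon n) : Prop :=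
  exists a : mon n, betti gens k a <> 0%N /\ mdiv a m.

End Monomials.

From mathcomp Require Import all_boot all_algebra.
From mathcomp Require Import ring.
Set Implicit Arguments. Unset Strict Implicit. Unset Printing Implicit Defensive.
Import GRing.Theory.
Local Open Scope ring_scope.

(* [I] is the edge ideal of a graph, and its exchange property says that a
   non-isolated vertex not adjacent to [p] is adjacent to every neighbour of [p]:
   up to isolated vertices the graph is complete multipartite.  In multidegree
   [a], [Tor_k(K, I)_a] is the homology of a subcomplex of the Koszul complex.  If
   [x_i ^ 2] divides [x ^ a], or [i] is isolated, multiplication by [e_i] is a
   contracting homotopy of it.  Hence the [k]-th shifts are squarefree, [x_S] with
   [|S| = k + 2], [S] containing an edge and no isolated vertex; conversely every
   such [S] carries a nonzero cycle in degree [k] while the complex vanishes in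
   degree [k + 1].  These sets [S] satisfy the basis exchange axiom. *)

Section KoszulSigns.
Variables (n : nat) (R : comNzRingType).
Implicit Types (F E G S P : {set 'I_n}) (i j l x y : 'I_n).

Definition ksgn j F : R := (-1) ^+ #|[set l in F | (l < j)%N]|.

(* The coefficient of [e_E] in the Koszul boundary of [e_F]. *)
Definition kbd F E : R := \sum_(j in F | E == F :\ j) ksgn j F.

Lemma ksgnK j F : ksgn j F * ksgn j F = 1.
Proof. by rewrite /ksgn -exprD -signr_odd addnn odd_double. Qed.

Lemma ksgn_neq0 j F : ksgn j F != 0.
Proof. by rewrite signr_eq0. Qed.

Lemma ksgnD1 j l G : l \in G -> j != l ->
  ksgn j (G :\ l) = if (l < j)%N then - ksgn j G else ksgn j G.
Proof.
move=> lG jl; rewrite /ksgn; case: ifP => lj.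
  rewrite (cardsD1 l [set m in G | (m < j)%N]) inE lG lj exprS mulN1r opprK.
  by congr (_ ^+ _); apply: eq_card => m; rewrite !inE andbA.
congr (_ ^+ _); apply: eq_card => m; rewrite !inE.
by case: eqP => [->|]; rewrite ?lj ?andbF.
Qed.

Lemma ksgnD1C j l G : j \in G -> l \in G -> j != l ->
  ksgn j G * ksgn l (G :\ j) = - (ksgn l G * ksgn j (G :\ l)).
Proof.
move=> jG lG jl; have lj : l != j by rewrite eq_sym.
rewrite (ksgnD1 jG lj) (ksgnD1 lG jl).
case: (ltngtP j l) => [_|_|/val_inj ejl]; [ring | ring | by rewrite ejl eqxx in jl].
Qed.

Lemma ksgnD1_cone i j S : i \in S -> j \in S -> i != j ->
  ksgn j (S :\ i) * ksgn i (S :\ j) = - (ksgn i S * ksgn j S).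
Proof.
move=> iS jS ij; have ji : j != i by rewrite eq_sym.
rewrite (ksgnD1 iS ji) (ksgnD1 jS ij).
case: (ltngtP i j) => [_|_|/val_inj eij]; [ring | ring | by rewrite eij eqxx in ij].
Qed.

Lemma eq_setD1 F j l : j \in F -> l \in F -> (F :\ j == F :\ l) = (j == l).
Proof.
move=> jF lF; apply/eqP/eqP => [eFjl|-> //]; apply/eqP; apply: contraT => jl.
have : j \in F :\ l by rewrite !inE jl jF.
by rewrite -eFjl !inE eqxx.
Qed.

Lemma kbd_setD1 F j : j \in F -> kbd F (F :\ j) = ksgn j F.
Proof.
move=> jF; rewrite /kbd (big_pred1 j) // => l /=.
case lF: (l \in F); first by rewrite eq_setD1 // eq_sym.
by apply/esym/eqP => elj; rewrite -elj lF in jF.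
Qed.

Lemma kbd_neq0 F E : kbd F E != 0 -> exists2 j, j \in F & E = F :\ j.
Proof.
case: (pickP (fun j => (j \in F) && (E == F :\ j))) => [j /andP[jF /eqP ->]|none].
  by exists j.
by rewrite /kbd big1 ?eqxx // => j; rewrite none.
Qed.

Lemma kbd_mulr_sum G (g : {set 'I_n} -> R) :
  \sum_F kbd G F * g F = \sum_(j in G) ksgn j G * g (G :\ j).
Proof.
under eq_bigr do rewrite /kbd big_distrl /= big_mkcond /=.
rewrite exchange_big [RHS]big_mkcond; apply: eq_bigr => j _ /=.
case: (j \in G); last by rewrite big1.
by rewrite -big_mkcond (big_pred1 (G :\ j)) // => F; rewrite eq_sym.
Qed.

(* Pairing the terms [(j, l)] and [(l, j)] through [l < j], rather than halving
   the sum, keeps this valid in characteristic 2. *)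
Lemma sum_offdiag_antisym (f : 'I_n -> 'I_n -> R) :
  (forall j l, j != l -> f j l = - f l j) ->
  \sum_j \sum_l (if j != l then f j l else 0) = 0.
Proof.
move=> f_anti.
have split_jl j : \sum_l (if j != l then f j l else 0) =
    \sum_(l : 'I_n) (if (l < j)%N then f j l else 0) +
    \sum_(l : 'I_n) (if (j < l)%N then f j l else 0).
  rewrite -big_split; apply: eq_bigr => l _ /=.
  by rewrite -val_eqE neq_ltn; case: ltngtP; rewrite ?addr0 ?add0r.
under eq_bigr do rewrite split_jl.
rewrite big_split /= [X in _ + X]exchange_big -big_split /=.
apply: big1 => j _; rewrite -big_split; apply: big1 => l _ /=.
case: ifP => [lj|]; last by rewrite addr0.
by rewrite f_anti ?addNr // neq_ltn lj orbT.
Qed.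

Lemma kbd_sum_support S P E : P \subset S ->
  \sum_(x in P) ksgn x S * kbd (S :\ x) E != 0 ->
  exists x y, [/\ x \in P, y \in S :\: P & E = S :\ x :\ y].
Proof.
move=> PS; case: (pickP [pred xy : 'I_n * 'I_n |
    [&& xy.1 \in P, xy.2 \in S :\: P & E == S :\ xy.1 :\ xy.2]]) => [[x y]|none].
  by case/and3P => xP yP /eqP ->; exists x, y.
move/eqP; case.
pose g x y := if [&& x \in P, y \in P & E == S :\ x :\ y]
              then ksgn x S * ksgn y (S :\ x) else 0.
transitivity (\sum_x \sum_y (if x != y then g x y else 0)).
  rewrite big_mkcond /=; apply: eq_bigr => x _.
  case xP: (x \in P); last by rewrite big1 // => y _; rewrite /g xP; case: ifP.
  rewrite /kbd big_distrr big_mkcond /=; apply: eq_bigr => y _.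
  rewrite /g xP !inE [y == x]eq_sym; case: eqP => //= _.
  case yP: (y \in P); first by rewrite (subsetP PS y yP).
  case yS: (y \in S) => //=; have := none (x, y); rewrite /= xP !inE yP yS /=.
  by case: (E == _).
apply: sum_offdiag_antisym => x y xy; rewrite /g setDDl setUC -setDDl.
case xP: (x \in P); case yP: (y \in P); rewrite /= ?oppr0 //.
by case: (E == _); rewrite ?oppr0 // ksgnD1C // (subsetP PS).
Qed.

Lemma kbd_kbd G E : \sum_F kbd G F * kbd F E = 0.
Proof.
rewrite kbd_mulr_sum; apply/eqP; apply: contraT.
by case/(kbd_sum_support (subxx G)) => x [y [_]]; rewrite setDv inE.
Qed.

(* Left multiplication by [e_i]. *)
Definition kcone i E G : R := if (i \notin E) && (G == i |: E) then ksgn i G else 0.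

Lemma kbd_kcone_in i F G : i \in F ->
  \sum_E kbd F E * kcone i E G = (F == G)%:R.
Proof.
move=> iF; rewrite kbd_mulr_sum (bigD1 i) //= big1 => [|j /andP [jF ji]]; last first.
  by rewrite /kcone !inE [i == j]eq_sym ji iF mulr0.
rewrite /kcone !inE eqxx setD1K // addr0 eq_sym.
by case: eqP => [->|]; rewrite ?ksgnK ?mulr0.
Qed.

Lemma kbd_kcone_notin i F G : i \notin F ->
  \sum_E kbd F E * kcone i E G + ksgn i (i |: F) * kbd (i |: F) G = (F == G)%:R.
Proof.
move=> iF; set X := i |: F.
rewrite /kbd big_mkcondr /= big_setU1 //= setU1K // [F == G]eq_sym.
rewrite mulrDr addrCA kbd_mulr_sum big_distrr -big_split big1 /= => [|j jF].
  by case: eqP; rewrite ?ksgnK ?mulr0 ?addr0.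
have ji : j != i by apply: contraNneq iF => <-.
have eXj : X :\ j = i |: (F :\ j).
  apply/setP => l; rewrite !inE.
  by case: (eqVneq l i) => [->|] //=; rewrite andbT eq_sym.
rewrite /kcone !inE (negbTE iF) andbF /= -eXj.
case: eqP => [->|_]; last by rewrite !mulr0 addr0.
rewrite -{1}(setU1K iF) -/X ksgnD1_cone ?setU11 ?setU1r // 1?eq_sym //.
by rewrite addNr.
Qed.
End KoszulSigns.

Section Monomials.
Variable n : nat.
Implicit Types (u v m a : mon n) (S T F E : {set 'I_n}) (gens : seq (mon n)).

Lemma mdiv_refl u : mdiv u u.
Proof. exact/forallP. Qed.

Lemma mdiv_trans u v m : mdiv u v -> mdiv v m -> mdiv u m.
Proof.
by move=> /forallP uv /forallP vm; apply/forallP => i; apply: leq_trans (uv i) (vm i).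
Qed.

Lemma mdeg_mdiv u v : mdiv u v -> (mdeg u <= mdeg v)%N.
Proof. by move=> /forallP uv; apply: leq_sum => i _. Qed.

Lemma mdeg_mdiv_ltn u v : mdiv u v -> u != v -> (mdeg u < mdeg v)%N.
Proof.
move=> /forallP uv /eqP neq_uv.
have [i lt_uvi] : exists i, (u i < v i)%N.
  apply/existsP; apply: contraT; rewrite negb_exists => /forallP ge_uv.
  by case: neq_uv; apply/ffunP => i; apply/eqP; rewrite eqn_leq uv leqNgt ge_uv.
rewrite /mdeg (bigD1 i) // [X in (_ < X)%N](bigD1 i) //= -addSn.
by apply: leq_add => //; apply: leq_sum => l _.
Qed.

Lemma gen_ideal_mdiv gens u m : mdiv u m -> gen_ideal gens u -> gen_ideal gens m.
Proof.
by move=> um /hasP [g gin gu]; apply/hasP; exists g => //; apply: mdiv_trans gu um.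
Qed.

(* A divisor of [m] in [gens] of least degree is a minimal generator. *)
Lemma ex_mingen gens m : gen_ideal gens m ->
  exists2 u, mingen (gen_ideal gens) u & mdiv u m.
Proof.
move=> Jm; pose P d := has (fun g => mdiv g m && (mdeg g == d)) gens.
have exP : exists d, P d.
  by case/hasP: Jm => g gin gm; exists (mdeg g); apply/hasP; exists g; rewrite ?gm ?eqxx.
case: (ex_minnP exP) => d /hasP [g gin /andP [gm /eqP dg]] d_min.
exists g => //; split; first by apply/hasP; exists g; rewrite ?mdiv_refl.
move=> v /hasP [g' g'in g'v] vg; apply/eqP; apply: contraT => neq_vg.
have : (d <= mdeg g')%N.
  apply: d_min; apply/hasP; exists g' => //.
  by rewrite eqxx andbT (mdiv_trans g'v (mdiv_trans vg gm)).
by rewrite -dg leqNgt (leq_ltn_trans (mdeg_mdiv g'v) (mdeg_mdiv_ltn vg neq_vg)).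
Qed.

Lemma mdeg_indic T : mdeg (indic T) = #|T|.
Proof.
rewrite /mdeg -sum1_card [RHS]big_mkcond; apply: eq_bigr => i _.
by rewrite ffunE; case: (i \in T).
Qed.

Lemma mdiv_indic T m : mdiv (indic T) m = [forall x in T, (0 < m x)%N].
Proof.
apply/forallP/forall_inP => [Tm x xT|Tm x]; first by have := Tm x; rewrite ffunE xT.
by rewrite ffunE; case xT: (x \in T) => //; apply: Tm.
Qed.

Lemma mdiv_indic_subset S T : mdiv (indic T) (indic S) = (T \subset S).
Proof.
rewrite mdiv_indic; apply/forall_inP/subsetP => TS x /TS; rewrite ffunE //.
  by case: (x \in S).
by move=> ->.
Qed.

Lemma mexch_indic T i j : i \in T -> j \notin T ->
  mexch (indic T) i j = indic (j |: (T :\ i)).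
Proof.
move=> iT jT; apply/ffunP => l; rewrite !ffunE !inE.
case: (eqVneq l i) => [->|_].
  by case: (eqVneq i j) => [eij|]; [rewrite -eij iT in jT | rewrite iT].
by case: (eqVneq l j) => [->|_]; rewrite ?(negbTE jT) /= ?subn0 ?addn0.
Qed.

Lemma kbasis_sub gens a F E : kbasis gens a F -> E \subset F -> kbasis gens a E.
Proof.
case/andP => /forall_inP Fpos JF EF; apply/andP; split.
  by apply/forall_inP => x /(subsetP EF); apply: Fpos.
apply: gen_ideal_mdiv JF; apply/forallP => x; rewrite !ffunE leq_sub2l //.
by case xE: (x \in E); rewrite // (subsetP EF x xE).
Qed.

Lemma kbasis_indic gens S F :
  kbasis gens (indic S) F = (F \subset S) && gen_ideal gens (indic (S :\: F)).
Proof.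
rewrite /kbasis -mdiv_indic mdiv_indic_subset; case: (boolP (F \subset S)) => //= FS.
congr (gen_ideal gens _); apply/ffunP => i; rewrite !ffunE !inE.
by case iF: (i \in F); rewrite ?(subsetP FS i iF) ?subn0.
Qed.

End Monomials.

Section KoszulComplex.
Variables (n : nat) (K : fieldType) (gens : seq (mon n)).
Implicit Types (F E G : {set 'I_n}) (a : mon n) (B : {set {set 'I_n}}).

Lemma kdiff_entryE k a F E : kbasis gens a F -> #|F| = k ->
  kdiff_entry K gens k a F E = kbd K F E.
Proof.
move=> kF cF; rewrite /kdiff_entry kF cF eqxx /=.
case kE: (kbasis gens a E) => //; apply/esym/eqP; apply: contraFT kE.
by case/kbd_neq0 => j jF ->; apply: kbasis_sub kF (subD1set F j).
Qed.

Definition ev (c : 'I_(NS n)) : {set 'I_n} := enum_val c.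

Lemma sum_ev (g : {set 'I_n} -> K) : \sum_(c < NS n) g (ev c) = \sum_F g F.
Proof. by rewrite /ev /NS -(big_enum_val (A := predT)). Qed.

Lemma sum_delta (X : {set 'I_n}) (g : {set 'I_n} -> K) :
  \sum_F (F == X)%:R * g F = g X.
Proof.
by rewrite (bigD1 X) //= eqxx mul1r big1 ?addr0 // => F /negbTE ->; rewrite mul0r.
Qed.

Lemma sum_enum_val_supp B (g : {set 'I_n} -> K) :
  (forall F, F \notin B -> g F = 0) -> \sum_(r < #|B|) g (enum_val r) = \sum_F g F.
Proof.
move=> g0; rewrite -(big_enum_val (A := mem B)) big_mkcond /=.
by apply: eq_bigr => F _; case: ifP => // /negbT /g0.
Qed.

Definition smx (f : {set 'I_n} -> {set 'I_n} -> K) : 'M[K]_(NS n) :=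
  \matrix_(p, q) f (ev p) (ev q).

Lemma smx_mul f g : smx f *m smx g = smx (fun P Q => \sum_X f P X * g X Q).
Proof.
apply/matrixP => p q; rewrite !mxE; under eq_bigr do rewrite !mxE.
exact: (sum_ev (fun X => f (ev p) X * g X (ev q))).
Qed.

Lemma smx_add f g : smx f + smx g = smx (fun P Q => f P Q + g P Q).
Proof. by apply/matrixP => p q; rewrite !mxE. Qed.

Definition selmx B : 'M[K]_(#|B|, NS n) :=
  \matrix_(r, c) (ev c == enum_val r)%:R.

Lemma selmx_mul B f r c : (selmx B *m smx f) r c = f (enum_val r) (ev c).
Proof.
rewrite !mxE; under eq_bigr do rewrite !mxE.
by rewrite (sum_ev (fun F => (F == enum_val r)%:R * f F (ev c))) sum_delta.
Qed.

Lemma selmx_mul_tr B : selmx B *m (selmx B)^T = 1%:M.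
Proof.
apply/matrixP => r s; rewrite !mxE; under eq_bigr do rewrite !mxE.
rewrite (sum_ev (fun F => (F == enum_val r)%:R * (F == enum_val s)%:R)) sum_delta.
by rewrite (inj_eq enum_val_inj).
Qed.

Lemma mxrank_selmx B : \rank (selmx B) = #|B|.
Proof.
apply/eqP; rewrite eqn_leq rank_leq_row -{1}(mxrank1 K #|B|) -selmx_mul_tr.
exact: mxrankM_maxl.
Qed.

Lemma trmx_selmx_mul B f : (forall F G, F \notin B -> f F G = 0) ->
  (selmx B)^T *m (selmx B *m smx f) = smx f.
Proof.
move=> f0; apply/matrixP => p c; rewrite [LHS]mxE; under eq_bigr do rewrite selmx_mul !mxE.
rewrite (sum_enum_val_supp (g := fun F => (ev p == F)%:R * f F (ev c))).
  by under eq_bigr do rewrite eq_sym; rewrite sum_delta mxE.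
by move=> F /f0 ->; rewrite mulr0.
Qed.

Lemma betti_eq0_homotopy k a (h : {set 'I_n} -> {set 'I_n} -> K) :
  (forall F G, kbasis gens a F -> #|F| = k ->
    \sum_E kdiff_entry K gens k a F E * h E G
    + \sum_E h F E * kdiff_entry K gens k.+1 a E G = (F == G)%:R) ->
  betti K gens k a = 0%N.
Proof.
move=> homotopy; set B := [set F | kbasis gens a F & #|F| == k].
set D := kdiff K gens k a; set D' := kdiff K gens k.+1 a.
have sel_id : selmx B *m (D *m smx h + smx h *m D') = selmx B.
  rewrite !smx_mul smx_add; apply/matrixP => r c; rewrite selmx_mul !mxE eq_sym.
  by have := enum_valP r; rewrite inE => /andP [kr /eqP cr]; apply: homotopy.
have : (#|B| <= \rank D + \rank D')%N.
  rewrite -mxrank_selmx -{1}sel_id mulmxDr; apply: leq_trans (mxrank_add _ _) _.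
  apply: leq_add; apply: leq_trans (mxrankM_maxr _ _) _; rewrite ?mxrankM_maxl ?mxrankM_maxr //.
by move=> le_B; apply/eqP; rewrite /betti /kdim -/B -subnDA subn_eq0.
Qed.

Lemma betti_neq0_cycle k a (z : {set 'I_n} -> K) F0 :
  (forall F, kbasis gens a F -> #|F| != k.+1) ->
  (forall F, z F != 0 -> kbasis gens a F /\ #|F| = k) ->
  z F0 != 0 ->
  (forall E, \sum_F z F * kbd K F E = 0) ->
  betti K gens k a != 0%N.
Proof.
move=> no_next z_supp zF0 z_cycle; set B := [set F | kbasis gens a F & #|F| == k].
set D := kdiff K gens k a.
have D'0 : kdiff K gens k.+1 a = 0.
  apply/matrixP => p q; rewrite !mxE /kdiff_entry.
  by case: and3P => // [[kp _ /eqP cp]]; have := no_next _ kp; rewrite cp eqxx.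
have z0 F : F \notin B -> z F = 0.
  by apply: contraNeq => /z_supp [kF cF]; rewrite inE kF cF eqxx.
pose y : 'rV[K]_#|B| := \row_r z (enum_val r).
have yD : y *m (selmx B *m D) = 0.
  apply/matrixP => i c; rewrite !mxE; under eq_bigr do rewrite selmx_mul mxE.
  rewrite (sum_enum_val_supp (g := fun F => z F * kdiff_entry K gens k a F (ev c))); last first.
    by move=> F /z0 ->; rewrite mul0r.
  transitivity (\sum_F z F * kbd K F (ev c)); last exact: z_cycle.
  apply: eq_bigr => F _.
  by case: (eqVneq (z F) 0) => [->|/z_supp [kF cF]]; rewrite ?mul0r ?kdiff_entryE.
have y0 : y != 0.
  have F0B : F0 \in B by rewrite inE; case/z_supp: zF0 => -> ->; rewrite eqxx.
  apply: contraNneq zF0 => /matrixP /(_ 0 (enum_rank_in F0B F0)).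
  by rewrite !mxE enum_rankK_in // => ->.
have y_ker : (y <= kermx (selmx B *m D))%MS by rewrite sub_kermx yD.
have : (0 < #|B| - \rank (selmx B *m D))%N.
  by rewrite -mxrank_ker; apply: leq_trans (mxrankS y_ker); rewrite rank_rV y0.
rewrite /betti /kdim -/B -/D D'0 mxrank0 subn0 !subn_gt0 -lt0n subn_gt0.
have D_sel : (selmx B)^T *m (selmx B *m D) = D.
  apply: trmx_selmx_mul => F G; rewrite inE /kdiff_entry => /negbTE nB.
  by case: and3P => // [[kF _ cF]]; rewrite kF cF in nB.
by apply: leq_ltn_trans; rewrite -{1}D_sel mxrankM_maxr.
Qed.

Lemma betti_cone k a i :
  (forall F, kbasis gens a F -> i \notin F -> kbasis gens a (i |: F)) ->
  betti K gens k a = 0%N.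
Proof.
move=> cone; apply: (betti_eq0_homotopy (h := kcone K i)) => F G kF cF.
under eq_bigr do rewrite kdiff_entryE //.
have [iF|iF] := boolP (i \in F).
  by rewrite kbd_kcone_in // big1 ?addr0 // => E _; rewrite /kcone iF mul0r.
rewrite -(kbd_kcone_notin _ G iF); congr (_ + _).
rewrite (bigD1 (i |: F)) //= big1 => [|E /negbTE nE].
  by rewrite /kcone iF eqxx addr0 kdiff_entryE ?cone // cardsU1 iF cF.
by rewrite /kcone iF nE mul0r.
Qed.

End KoszulComplex.

Section QuadraticMatroidal.
Variables (n : nat) (gens : seq (mon n)).
Local Notation J := (gen_ideal gens).
Hypothesis J_matroidal : matroidal J.
Hypothesis J_deg2 : generated_in_degree J 2.
Implicit Types (S T F : {set 'I_n}) (u m a : mon n) (x y p w i : 'I_n).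

Definition edge x y := (x != y) && J (indic [set x; y]).

Lemma edge_sym x y : edge x y = edge y x.
Proof. by rewrite /edge eq_sym setUC. Qed.

Lemma mingen_edge u : mingen J u -> exists x y, edge x y /\ u = indic [set x; y].
Proof.
move=> mu; pose T := [set i | u i != 0%N].
have uT : u = indic T.
  apply/ffunP => i; rewrite ffunE inE; have := J_matroidal.2 u mu i.
  by case: (u i) => [|[|]].
have /cards2P [x [y [xy Txy]]] : #|T| == 2 by rewrite -mdeg_indic -uT J_deg2.
by exists x, y; rewrite /edge xy -Txy -uT; case: mu.
Qed.

Lemma gen_ideal_edgeP m :
  reflect (exists x y, [/\ edge x y, (0 < m x)%N & (0 < m y)%N]) (J m).
Proof.
apply: (iffP idP) => [Jm|[x [y [/andP [_ Jxy] mx my]]]].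
  have [u /mingen_edge [x [y [exy ->]]]] := ex_mingen Jm.
  rewrite mdiv_indic => /forall_inP xy_m.
  by exists x, y; split; rewrite // xy_m // !inE eqxx ?orbT.
by apply: gen_ideal_mdiv Jxy; rewrite mdiv_indic; apply/forall_inP => z /set2P [] ->.
Qed.

Lemma gen_ideal_indicP T :
  reflect (exists x y, [/\ edge x y, x \in T & y \in T]) (J (indic T)).
Proof.
apply: (iffP (gen_ideal_edgeP _)) => -[x [y [exy xT yT]]]; exists x, y;
  by move: xT yT; rewrite !ffunE; case: (x \in T); case: (y \in T).
Qed.

Lemma edge_mingen x y : edge x y -> mingen J (indic [set x; y]).
Proof.
case/andP => xy Jxy; have [u mu] := ex_mingen Jxy.
have [x' [y' [/andP [xy' _] eu]]] := mingen_edge mu.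
rewrite eu mdiv_indic_subset => sub.
suff e : [set x'; y'] = [set x; y] by rewrite -e -eu.
by apply/eqP; rewrite eqEcard sub !cards2 xy xy'.
Qed.

Lemma edge_exchange x w p y :
  edge x w -> edge p y -> w != p -> w != y -> edge x p || edge x y.
Proof.
move=> exw epy wp wy; have xw : x != w by case/andP: exw.
have lt_w : (indic [set p; y] w < indic [set x; w] w)%N.
  by rewrite !ffunE !inE eqxx orbT (negbTE wp) (negbTE wy).
have [j [+ mj]] := J_matroidal.1.2 _ _ (edge_mingen exw) (edge_mingen epy) w lt_w.
rewrite !ffunE !inE; case: (eqVneq j x) => [->|jx]; first by rewrite ltnNge leq_b1.
case: (eqVneq j w) => [->|jw]; first by rewrite orbT ltnNge leq_b1.
rewrite /= lt0b => jpy.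
have exj : edge x j.
  move: mj; rewrite mexch_indic ?inE ?eqxx ?orbT ?negb_or ?jx ?jw // => -[Jxj _].
  rewrite /edge eq_sym jx; suff <- : j |: ([set x; w] :\ w) = [set x; j] by [].
  apply/setP => l; rewrite !inE; case: (eqVneq l w) => [->|_] /=; last by rewrite orbF orbC.
  by rewrite [w == j]eq_sym (negbTE jw) [w == x]eq_sym (negbTE xw).
by case/orP: jpy => /eqP <-; rewrite exj ?orbT.
Qed.

Lemma edge_nonadj x p y : [exists w, edge x w] -> ~~ edge x p -> edge p y -> edge x y.
Proof.
move=> /existsP [w exw] nxp epy; have [<- //|wy] := eqVneq w y.
have wp : w != p by apply: contraNneq nxp => <-.
by move: (edge_exchange exw epy wp wy); rewrite (negbTE nxp).
Qed.

Definition hs_set k S :=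
  [&& #|S| == k.+2, J (indic S) & [forall x in S, [exists y, edge x y]]].

Lemma kbasis_setU1 a i F : (1 < a i)%N || ~~ [exists y, edge i y] -> (0 < a i)%N ->
  kbasis gens a F -> i \notin F -> kbasis gens a (i |: F).
Proof.
move=> hi ai /andP [/forall_inP Fpos JF] iF; apply/andP; split.
  by apply/forall_inP => l /setU1P [->|/Fpos].
have keep z t : edge z t -> (0 < [ffun l => a l - indic F l] z)%N ->
    (0 < [ffun l => a l - indic (i |: F) l] z)%N.
  rewrite !ffunE !inE; case: (eqVneq z i) => [-> eit|//] /= _.
  by rewrite subn_gt0; case/orP: hi => // /existsPn /(_ t); rewrite eit.
case/gen_ideal_edgeP: JF => x [y [exy hx hy]]; apply/gen_ideal_edgeP; exists x, y.
split=> //; first exact: (keep x y exy hx).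
by apply: (keep y x _ hy); rewrite edge_sym.
Qed.

Variable K : fieldType.

Lemma betti_neq0_squarefree k a i : betti K gens k a != 0%N -> (0 < a i)%N ->
  (a i == 1%N) && [exists y, edge i y].
Proof.
move=> bne ai; apply: contraNT bne => not_sqf; apply/eqP.
apply: (@betti_cone _ K gens k a i) => F; apply: kbasis_setU1 => //.
by move: not_sqf; rewrite negb_and ltn_neqAle eq_sym ai andbT orbC.
Qed.

Lemma betti_neq0_hs_set k a : betti K gens k a != 0%N ->
  exists2 S, hs_set k S & mdiv (indic S) a.
Proof.
move=> bne; have sqf := betti_neq0_squarefree bne.
have : (0 < kdim gens k a)%N.
  by move: bne; rewrite /betti -lt0n => /leq_trans; apply; rewrite -subnDA leq_subr.
rewrite /kdim card_gt0 => /set0Pn [F]; rewrite inE => /andP [kF /eqP cF].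
case/andP: (kF) => /forall_inP Fpos /gen_ideal_edgeP [x [y [exy]]].
have outF z : (0 < [ffun l => a l - indic F l] z)%N -> (z \notin F) && (0 < a z)%N.
  rewrite !ffunE; case zF: (z \in F) => /=; last by rewrite subn0.
  by case/andP: (sqf z (Fpos z zF)) => /eqP ->.
move=> /outF /andP [xF ax] /outF /andP [yF ay]; have xy : x != y by case/andP: exy.
have posS z : z \in x |: (y |: F) -> (0 < a z)%N.
  by rewrite !inE => /or3P [/eqP ->|/eqP ->|/Fpos].
exists (x |: (y |: F)); last by rewrite mdiv_indic; apply/forall_inP.
apply/and3P; split.
- by rewrite !cardsU1 !inE negb_or xy xF yF cF.
- by apply/gen_ideal_indicP; exists x, y; rewrite !inE !eqxx ?orbT.
- by apply/forall_inP => z /posS /sqf /andP [].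
Qed.

Lemma kbasis_indic_card S F : kbasis gens (indic S) F -> (#|F|.+2 <= #|S|)%N.
Proof.
rewrite kbasis_indic => /andP [FS /gen_ideal_indicP [x [y [/andP [xy _] xSF ySF]]]].
have sub2 : [set x; y] \subset S :\: F by apply/subsetP => t /set2P [] ->.
have := subset_leq_card sub2; rewrite cards2 xy.
by rewrite cardsD (setIidPr FS) leq_subRL ?addn2 // subset_leq_card.
Qed.

Lemma kbasis_indic_edge S x y : x \in S -> y \in S -> edge x y ->
  kbasis gens (indic S) (S :\ x :\ y) /\ #|S :\ x :\ y|.+2 = #|S|.
Proof.
move=> xS yS /andP [xy Jxy]; split.
  rewrite kbasis_indic (subset_trans (subD1set _ y) (subD1set _ x)) /=.
  suff -> : S :\: (S :\ x :\ y) = [set x; y] by [].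
  apply/setP => t; rewrite !inE.
  have [->|_] := eqVneq t x; first by rewrite /= andbF xS.
  by have [->|_] := eqVneq t y; rewrite /= ?yS ?andNb.
by rewrite (cardsD1 x S) (cardsD1 y (S :\ x)) xS !inE eq_sym xy yS.
Qed.

(* [z] is the formal boundary of [sum_(x in P) +-e_(S :\ x)], where [P] is the
   side of [p] in the complete multipartite graph on [S]: the terms
   [e_(S :\ x :\ y)] with [x, y] both in [P] cancel, and in the others [x] and
   [y] are adjacent, so [S :\ x :\ y] is a basis element. *)
Lemma betti_hs_set k S : hs_set k S -> betti K gens k (indic S) != 0%N.
Proof.
case/and3P => /eqP cS /gen_ideal_indicP [p [q [epq pS qS]]] /forall_inP S_nonisol.
have pq : p != q by case/andP: epq.
pose P := [set x in S | (x == p) || ~~ edge x p].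
have PS : P \subset S by apply/subsetP => x /setIdP [].
have P_edge x y : x \in P -> y \in S :\: P -> edge x y.
  move=> /setIdP [xS x_side] /setDP [yS]; rewrite inE yS negb_or negbK /= => /andP [_ eyp].
  case/orP: x_side => [/eqP ->|nxp]; first by rewrite edge_sym.
  by apply: edge_nonadj (S_nonisol x xS) nxp _; rewrite edge_sym.
pose z F := \sum_(x in P) ksgn K x S * kbd K (S :\ x) F.
apply: (betti_neq0_cycle (z := z) (F0 := S :\ p :\ q)).
- move=> F /kbasis_indic_card; rewrite cS !ltnS.
  by apply: contraTneq => ->; rewrite ltnn.
- move=> F /(kbd_sum_support PS) [x [y [xP yP ->]]].
  have [kb cb] := kbasis_indic_edge (subsetP PS x xP) (subsetP (subsetDl S P) y yP)
    (P_edge x y xP yP).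
  by split=> //; apply/eqP; rewrite -2!eqSS cb cS.
- have pP : p \in P by rewrite inE pS eqxx.
  have qP : q \notin P by rewrite inE qS /= eq_sym (negbTE pq) edge_sym epq.
  rewrite /z (bigD1 p) //= big1 => [|x /andP [xP xp]].
    by rewrite addr0 kbd_setD1 ?mulf_neq0 ?ksgn_neq0 // !inE eq_sym pq qS.
  apply/eqP; rewrite mulf_eq0; apply/orP; right; apply: contraT => /kbd_neq0 [j _ e].
  have xq : x != q by apply: contraNneq qP => <-.
  have : x \in S :\ p :\ q by rewrite !inE xq xp (subsetP PS).
  by rewrite e !inE eqxx andbF.
- move=> E; rewrite /z; under eq_bigr do rewrite big_distrl.
  rewrite exchange_big big1 //= => x _; under eq_bigr do rewrite -mulrA.
  by rewrite -big_distrr /= kbd_kbd mulr0.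
Qed.

Lemma HSP k m : HS K gens k m <-> exists2 S, hs_set k S & mdiv (indic S) m.
Proof.
split=> [[a [/eqP bne am]]|[S hS Sm]].
  by have [S hS Sa] := betti_neq0_hs_set bne; exists S => //; apply: mdiv_trans Sa am.
by exists (indic S); split=> //; apply/eqP/betti_hs_set.
Qed.

Lemma mingen_HSP k u : mingen (HS K gens k) u <-> exists2 S, hs_set k S & u = indic S.
Proof.
have HS_indic S : hs_set k S -> HS K gens k (indic S).
  by move=> hS; apply/HSP; exists S; rewrite ?mdiv_refl.
split=> [[/HSP [S hS Su] u_min]|[S hS ->]].
  by exists S => //; apply/esym/u_min => //; apply: HS_indic.
split=> [|v /HSP [T hT Tv] vS]; first exact: HS_indic.
have TS : T \subset S by rewrite -mdiv_indic_subset (mdiv_trans Tv vS).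
have eTS : T = S.
  apply/eqP; rewrite eqEcard TS.
  by case/and3P: hT => /eqP -> _ _; case/and3P: hS => /eqP -> _ _ /=.
apply/ffunP => x; apply/eqP; rewrite eqn_leq (forallP vS x) /=.
by move/forallP: Tv => /(_ x); rewrite eTS.
Qed.

Lemma hs_set_swap k G i j : hs_set k G -> i \in G -> j \notin G ->
  [exists y, edge j y] -> J (indic (j |: (G :\ i))) -> hs_set k (j |: (G :\ i)).
Proof.
case/and3P => /eqP cG _ /forall_inP G_nonisol iG jG j_nonisol Jj; apply/and3P; split=> //.
  move: cG; rewrite (cardsD1 i G) iG cardsU1 !inE negb_and jG orbT.
  by rewrite !add1n => -[->].
by apply/forall_inP => z /setU1P [->|/setD1P [_ /G_nonisol]].
Qed.

Lemma hs_set_exchange k G H i : hs_set k G -> hs_set k H -> i \in G -> i \notin H ->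
  exists2 j, j \in H :\: G & hs_set k (j |: (G :\ i)).
Proof.
move=> hG hH iG iH.
have H_nonisol : {in H, forall x, [exists y, edge x y]} by case/and3P: hH => _ _ /forall_inP.
have [JGi|nJGi] := boolP (J (indic (G :\ i))).
  have [j jHG] : exists j, j \in H :\: G.
    apply/set0Pn; rewrite setD_eq0; apply/negP => HG.
    have HGi : H \subset G :\ i.
      by apply/subsetP => t tH; rewrite !inE (subsetP HG t tH) andbT; apply: contraNneq iH => <-.
    case/and3P: hG hH => /eqP + _ _ /and3P [/eqP cH _ _].
    rewrite (cardsD1 i G) iG add1n => -[cGi].
    by have := subset_leq_card HGi; rewrite cH cGi ltnn.
  exists j => //; case/setDP: jHG => jH jG; apply: hs_set_swap => //; first exact: H_nonisol.
  by apply: gen_ideal_mdiv JGi; rewrite mdiv_indic_subset subsetUr.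
(* Otherwise every edge of [G] contains [i]. *)
have [r [eri rG]] : exists r, edge r i /\ r \in G.
  case/and3P: hG => _ /gen_ideal_indicP [x [y [exy xG yG]]] _.
  have [exi|xi] := eqVneq x i; first by exists y; rewrite edge_sym -exi.
  have [eyi|yi] := eqVneq y i; first by exists x; rewrite -eyi.
  by case/negP: nJGi; apply/gen_ideal_indicP; exists x, y; rewrite !inE xi yi.
case/and3P: (hH) => _ /gen_ideal_indicP [p [q [epq pH qH]]] _.
have ip : i != p by apply: contraNneq iH => ->.
have iq : i != q by apply: contraNneq iH => ->.
have ri : r != i by case/andP: eri.
have [j [jH erj]] : exists j, j \in H /\ edge r j.
  by case/orP: (edge_exchange eri epq ip iq) => ?; [exists p | exists q].
have ji : j != i by apply: contraNneq iH => <-.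
have jG : j \notin G.
  apply: contra nJGi => jG; apply/gen_ideal_indicP; exists r, j.
  by rewrite !inE ri ji rG jG.
exists j; first by rewrite inE jG jH.
apply: hs_set_swap => //; first exact: H_nonisol.
by apply/gen_ideal_indicP; exists r, j; rewrite !inE eqxx ri rG orbT.
Qed.

End QuadraticMatroidal.

Theorem corollary4p4 (K : fieldType) (n : nat) (gens : seq (mon n)) :
  matroidal (fun m => gen_ideal gens m) ->
  generated_in_degree (fun m => gen_ideal gens m) 2 ->
  forall k : nat, matroidal (HS K gens k).
Proof.
move=> J_matroidal J_deg2 k; have mingenP := mingen_HSP J_matroidal J_deg2 K k.
split; last by move=> u /mingenP [S _ ->] i; rewrite ffunE leq_b1.
split=> [|u v /mingenP [G hG ->] /mingenP [H hH ->] i].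
  by exists k.+2 => u /mingenP [S /and3P [/eqP cS _ _] ->]; rewrite mdeg_indic.
rewrite !ffunE; case iH: (i \in H); case iG: (i \in G) => // _.
have [j /setDP [jH jG] hGj] := hs_set_exchange J_matroidal J_deg2 hG hH iG (negbT iH).
exists j; split; first by rewrite !ffunE jH (negbTE jG).
by rewrite mexch_indic //; apply/mingenP; exists (j |: (G :\ i)).
Qed.
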